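(* For all ideals $\mathcal{I}$ and $\mathcal{J}$ on $\omega$, $\rho^{(\mathrm{FIN}\otimes\mathcal{I})}\not\approx_K\rho_{\mathcal{J}}$ (for any choice of almost disjoint family and enumeration in the definition of $\rho^{(\mathrm{FIN}\otimes\mathcal{I})}$).
   Context: An ideal on a set $X$: $\mathcal{J}\subseteq\mathcal{P}(X)$ with $\emptyset\in\mathcal{J}$, $X\notin\mathcal{J}$, closed under finite unions and subsets, containing all finite sets; $\mathcal{J}^+=\mathcal{P}(X)\setminus\mathcal{J}$. For an ideal $\mathcal{J}$ on $\omega$, $\rho_{\mathcal{J}}\colon\mathcal{J}^+\to[\omega]^\omega$, $\rho_{\mathcal{J}}(A)=A$ (domain family $\mathcal{J}^+\subseteq[\omega]^\omega$). $\mathrm{FIN}\otimes\mathcal{I}$ is the ideal on $\omega\times\omega$: $A\in\mathrm{FIN}\otimes\mathcal{I}$ iff $\{n:\{k:(n,k)\in A\}\notin\mathcal{I}\}$ is finite. Definition of $\rho^{(\mathrm{FIN}\otimes\mathcal{I})}$: let $\mathcal{A}=\{A_\alpha:\alpha<\mathfrak{c}\}$ be an almost disjoint family on $\omega$ (pairwise distinct infinite sets with pairwise finite intersections), $(\mathrm{FIN}\otimes\mathcal{I})^+=\{B_\alpha:\alpha<\mathfrak{c}\}$ an enumeration, $P_n=\{n\}\times\omega$, $\overline{\mathcal{A}}=\{A\setminus K:A\in\mathcal{A},K\in[\omega]^{<\omega}\}$, and $\rho^{(\mathrm{FIN}\otimes\mathcal{I})}(A_\alpha\setminus K)=B_\alpha\setminus\bigcup\{P_n:n<\max(K\cap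 A_\alpha)\}$, with $\max\emptyset=0$; it maps $\overline{\mathcal{A}}$ into $[\omega\times\omega]^\omega$. Katětov order for functions $\rho_i\colon\mathcal{F}_i\to[\Lambda_i]^\omega$ with $\mathcal{F}_i\subseteq[\Omega_i]^\omega$: $\rho_2\leq_K\rho_1$ if there is $f\colon\Lambda_1\to\Lambda_2$ such that for every $F_1\in\mathcal{F}_1$ there is $F_2\in\mathcal{F}_2$ such that for every finite $K_1\subseteq\Omega_1$ there is a finite $K_2\subseteq\Omega_2$ with $\rho_2(F_2\setminus K_2)\subseteq f[\rho_1(F_1\setminus K_1)]$. $\rho_1\approx_K\rho_2$ means $\rho_1\leq_K\rho_2$ and $\rho_2\leq_K\rho_1$. *)

From mathcomp Require Import all_boot.
From mathcomp Require Import boolp classical_sets cardinality.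
Set Implicit Arguments.
Unset Strict Implicit.
Unset Printing Implicit Defensive.
Local Open Scope classical_set_scope.

Definition is_ideal (X : Type) (J : set (set X)) : Prop :=
  [/\ J set0,
      ~ J setT,
      (forall A B, J A -> J B -> J (A `|` B)),
      (forall A B, B `<=` A -> J A -> J B) &
      (forall A, finite_set A -> J A)].

Definition positive (X : Type) (J : set (set X)) : set (set X) := ~` J.

(* rho_J : J^+ -> [omega]^omega, A |-> A  (the domain family is J^+) *)
Definition rho_ideal (A : set nat) : set nat := A.

Definition FIN_tensor (I : set (set nat)) : set (set (nat * nat)) :=
  fun A => finite_set [set n | ~ I [set k | A (n, k)]].

(* Katetov order for functions rho_i : F_i -> [Lambda_i]^omega,
   F_i subset of [Omega_i]^omega.  rho_i is given as a total function on
   subsets of Omega_i; only its values on the domain family F_i (and on the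
   sets F \ K with F in F_i, K finite, which lie in F_i in all cases used)
   matter.  katetov_le F2 rho2 F1 rho1  means  rho2 <=_K rho1. *)
Definition katetov_le (Om2 La2 Om1 La1 : Type)
    (F2 : set (set Om2)) (rho2 : set Om2 -> set La2)
    (F1 : set (set Om1)) (rho1 : set Om1 -> set La1) : Prop :=
  exists f : La1 -> La2,
    forall X1, F1 X1 ->
      exists2 X2, F2 X2 &
        forall K1 : set Om1, finite_set K1 ->
          exists2 K2 : set Om2, finite_set K2 &
            rho2 (X2 `\` K2) `<=` f @` (rho1 (X1 `\` K1)).

Definition katetov_equiv (Om1 La1 Om2 La2 : Type)
    (F1 : set (set Om1)) (rho1 : set Om1 -> set La1)
    (F2 : set (set Om2)) (rho2 : set Om2 -> set La2) : Prop :=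
  katetov_le F1 rho1 F2 rho2 /\ katetov_le F2 rho2 F1 rho1.

Definition almost_disjoint_family (T : Type) (A : T -> set nat) : Prop :=
  (forall a, ~ finite_set (A a)) /\
  (forall a b, a <> b -> A a <> A b /\ finite_set (A a `&` A b)).

Definition enumerates (T : Type) (B : T -> set (nat * nat))
    (P : set (set (nat * nat))) : Prop :=
  injective B /\ (forall X, P X <-> exists a, B a = X).

Definition Abar (T : Type) (A : T -> set nat) : set (set nat) :=
  [set X | exists a, exists2 K, finite_set K & X = A a `\` K].

(* rho^(FIN (x) I)(A_alpha \ K) = B_alpha \ U{P_n : n < max(K cap A_alpha)},
   max emptyset = 0.  A pair (n,k) survives iff n >= max (K cap A_alpha),
   i.e. iff every m in K cap A_alpha satisfies m <= n.  Since the
   representation X = A_alpha \ K determines alpha and K cap A_alpha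
   (A is almost disjoint), the union over all representations below is
   exactly the value of rho on X in Abar (and it is empty off Abar). *)
Definition rho_FIN (T : Type) (A : T -> set nat) (B : T -> set (nat * nat))
    (X : set nat) : set (nat * nat) :=
  [set p | exists a, exists2 K, finite_set K &
     [/\ X = A a `\` K, B a p & (forall m, K m -> A a m -> (m <= p.1)%N)]].

From mathcomp Require Import all_boot finmap.
From mathcomp Require Import boolp classical_sets cardinality.
Set Implicit Arguments.
Unset Strict Implicit.
Unset Printing Implicit Defensive.
Local Open Scope classical_set_scope.

(* Let g witness rho^(FIN x I) <=_K rho_J, let f witness the converse, and put
   h = fst o g o f.  The witness g maps J-positive sets to (FIN x I)-positive
   sets, while for every alpha some J-positive X is, up to finite sets,
   covered by f-images of arbitrarily late columns of B_alpha.  Hence no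
   positive C = B_alpha has thin fibers for h (outside finitely many values m,
   the fiber h^-1(m) meets only finitely many columns of C): otherwise every
   column m of g[X] outside that finite set would be finite.  But every
   h : omega x omega -> omega has a positive set with thin fibers: a positive
   fiber h^-1(m) itself, or else the set of points p with p.1 <= h(p) or
   lying on a positive column of the fiber through p. *)

Lemma finite_set_nat_bounded (K : set nat) :
  finite_set K -> exists N, K `<=` `I_N.
Proof.
move=> /finite_fsetP [X ->]; exists (\max_(x <- enum_fset X) x).+1 => x /= xX.
by rewrite ltnS; apply: (@leq_bigmax_seq _ _ xpredT id).
Qed.

Section Ideal.
Variables (X : Type) (I : set (set X)).
Hypothesis idealI : is_ideal I.

Lemma ideal0 : I set0. Proof. by case: idealI. Qed.

Lemma idealU (A B : set X) : I A -> I B -> I (A `|` B).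
Proof. by case: idealI => _ _ + _ _; apply. Qed.

Lemma idealS (A B : set X) : A `<=` B -> I B -> I A.
Proof. by case: idealI => _ _ _ + _; apply. Qed.

Lemma ideal_finite (A : set X) : finite_set A -> I A.
Proof. by case: idealI => _ _ _ _; apply. Qed.

Lemma ideal_setC (A : set X) : I (~` A) -> ~ I A.
Proof.
by case: idealI => _ IT _ _ _ ICA IA; apply: IT; rewrite -(setUv A); apply: idealU.
Qed.

Lemma ideal_bigcup_ord n (P : nat -> set X) :
  (forall m, (m < n)%N -> I (P m)) -> I (\bigcup_(m < n) P m).
Proof.
move=> IP; rewrite bigcup_mkord.
by apply: big_ind => [|A B|i _]; [exact: ideal0 | exact: idealU | exact: IP].
Qed.

End Ideal.

Section FinTensor.
Variable I : set (set nat).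
Hypothesis idealI : is_ideal I.

Lemma FIN_tensorS (C D : set (nat * nat)) :
  C `<=` D -> FIN_tensor I D -> FIN_tensor I C.
Proof.
move=> CD; apply: sub_finite_set => n /= nIC ID; apply: nIC.
by apply: (idealS idealI _ ID) => k /CD.
Qed.

Lemma FIN_tensor_tail (C : set (nat * nat)) N :
  ~ FIN_tensor I C -> ~ FIN_tensor I [set p | C p /\ (N <= p.1)%N].
Proof.
move=> posC finCN; apply: posC.
have : [set n | ~ I [set k | C (n, k)]] `<=`
       [set n | ~ I [set k | C (n, k) /\ (N <= n)%N]] `|` `I_N.
  move=> n /= nIC; have [nN|Nn] := ltnP n N; first by right.
  by left => ICN; apply: nIC; apply: (idealS idealI _ ICN).
by move/sub_finite_set; apply; rewrite finite_setU; split => //; exact: finite_II.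
Qed.

Definition thin_fibers (h : nat * nat -> nat) (C : set (nat * nat)) (S : set nat) :=
  forall m, ~ S m -> finite_set (fst @` (C `&` h @^-1` [set m])).

Lemma FIN_tensor_positive_thin_fibers (h : nat * nat -> nat) :
  exists2 C, ~ FIN_tensor I C & exists2 S, finite_set S & thin_fibers h C S.
Proof.
have [[m posm]|smallh] := pselect (exists m, ~ FIN_tensor I (h @^-1` [set m])).
  exists (h @^-1` [set m]) => //; exists [set m]; first exact: finite_set1.
  move=> m' m'm; apply: sub_finite_set (finite_set0 nat) => _ [q [/= -> hq] _].
  by apply: m'm.
have {}smallh m : FIN_tensor I (h @^-1` [set m]).
  by apply: contrapT => posm; apply: smallh; exists m.
pose C := [set p | (p.1 <= h p)%N \/ ~ I [set k | h (p.1, k) = h p]].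
exists C; last first.
  exists set0; first exact: finite_set0.
  move=> m _; have : finite_set (`I_m.+1 `|` [set n | ~ I [set k | h (n, k) = m]]).
    by rewrite finite_setU; split; [exact: finite_II | exact: smallh].
  apply: sub_finite_set => _ [[n k] [/= Cnk hnk] <-] /=.
  by move: Cnk; rewrite /C /= hnk; case; [left|right].
(* The complement of column n of C is covered by the n-th columns of the
   fibers h^-1(m), m < n, that lie in I. *)
have colC n : ~ I [set k | C (n, k)].
  apply: (ideal_setC idealI).
  pose P m := [set k | h (n, k) = m /\ I [set k | h (n, k) = m]].
  apply: (idealS idealI _ (@ideal_bigcup_ord _ _ idealI n P _)).
    move=> k; rewrite /C /= => /not_orP [/negP].
    by rewrite -ltnNge => hk /contrapT Ifib; exists (h (n, k)).
  move=> m _; have [Ifib|nIfib] := pselect (I [set k | h (n, k) = m]).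
    by apply: (idealS idealI _ Ifib) => k [].
  by apply: (idealS idealI _ (ideal0 idealI)) => k [].
by move=> finC; apply: infinite_nat; apply: sub_finite_set finC => n _; exact: colC.
Qed.

End FinTensor.

Definition katetov_witness (Om2 La2 Om1 La1 : Type)
    (F2 : set (set Om2)) (rho2 : set Om2 -> set La2)
    (F1 : set (set Om1)) (rho1 : set Om1 -> set La1) (f : La1 -> La2) : Prop :=
  forall X1, F1 X1 ->
    exists2 X2, F2 X2 &
      forall K1 : set Om1, finite_set K1 ->
        exists2 K2 : set Om2, finite_set K2 &
          rho2 (X2 `\` K2) `<=` f @` (rho1 (X1 `\` K1)).

Section Katetov.
Variables (I J : set (set nat)) (T : Type).
Variables (A : T -> set nat) (B : T -> set (nat * nat)).
Hypothesis idealI : is_ideal I.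
Hypothesis enumB : enumerates B (positive (FIN_tensor I)).

Lemma enumerated_positive a : ~ FIN_tensor I (B a).
Proof. by apply: (enumB.2 (B a)).2; exists a. Qed.

Lemma katetov_witness_image_positive (g : nat -> nat * nat) :
  katetov_witness (Abar A) (rho_FIN A B) (positive J) rho_ideal g ->
  forall X, ~ J X -> ~ FIN_tensor I (g @` X).
Proof.
move=> gP X JX FgX.
have [_ [a [K finK ->]] /(_ set0 (finite_set0 _)) [K2 finK2 sub]] := gP X JX.
have [N KN] : exists N, K `|` K2 `<=` `I_N.
  by apply: finite_set_nat_bounded; rewrite finite_setU.
apply: (FIN_tensor_tail idealI (N := N) (@enumerated_positive a)).
apply: (FIN_tensorS idealI _ FgX) => p [Bp Np].
have [x [Xx _] <-] : (g @` (X `\` set0)) p.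
  apply: sub; exists a, (K `|` K2); first by rewrite finite_setU.
  split => //; first by rewrite setDDl.
  by move=> m Km _; apply: leq_trans (ltnW (KN m Km)) Np.
by exists x.
Qed.

Hypothesis adA : almost_disjoint_family A.

(* By almost disjointness, every representation of A a `\` [set e] as
   A a' `\` K' has a' = a and e in K'. *)
Lemma rho_FIN_punctured a e : A a e ->
  rho_FIN A B (A a `\` [set e]) `<=` [set q | B a q /\ (e <= q.1)%N].
Proof.
move=> Ae q [a' [K' _ [E Bq qK']]].
have a'a : a' = a.
  apply: contrapT => a'a; have [_ finAA'] := adA.2 a a' (nesym a'a).
  apply: (adA.1 a).
  have : finite_set (A a `&` A a' `|` [set e]).
    by rewrite finite_setU; split => //; exact: finite_set1.
  apply: sub_finite_set => y Ay; have [->|ye] := pselect (y = e); first by right.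
  have [A'y _] : (A a' `\` K') y by rewrite -E.
  by left.
subst a'; split => //; apply: (qK' e _ Ae).
apply: contrapT => K'e.
have : (A a `\` [set e]) e by rewrite E.
by case=> _; apply.
Qed.

Lemma katetov_witness_covers (f : nat * nat -> nat) :
  katetov_witness (positive J) rho_ideal (Abar A) (rho_FIN A B) f ->
  forall a, exists2 X, ~ J X & forall N, exists2 K, finite_set K &
    X `\` K `<=` f @` [set q | B a q /\ (N <= q.1)%N].
Proof.
move=> fP a; have [|X JX cover] := fP (A a).
  by exists a, set0; [exact: finite_set0 | rewrite setD0].
exists X => // N.
have [e Ae Ne] : exists2 e, A a e & (N <= e)%N.
  apply: contrapT => noe; apply: (adA.1 a).
  apply: (sub_finite_set _ (finite_II N)) => x Ax /=.
  by rewrite ltnNge; apply/negP => Nx; apply: noe; exists x.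
have [K finK sub] := cover [set e] (finite_set1 e).
exists K => // x /sub [q /(rho_FIN_punctured Ae) [Bq eq] <-].
by exists q => //; split => //; exact: leq_trans Ne eq.
Qed.

Lemma katetov_witnesses_no_thin_fibers
    (g : nat -> nat * nat) (f : nat * nat -> nat) :
  katetov_witness (Abar A) (rho_FIN A B) (positive J) rho_ideal g ->
  katetov_witness (positive J) rho_ideal (Abar A) (rho_FIN A B) f ->
  forall C S, ~ FIN_tensor I C -> finite_set S ->
  ~ thin_fibers (fun q => (g (f q)).1) C S.
Proof.
move=> gP fP C S posC finS thinC.
have [a Ba] := (enumB.2 C).1 posC.
have [X JX cover] := katetov_witness_covers fP a.
apply: (katetov_witness_image_positive gP JX).
apply: sub_finite_set finS => m /= posm; apply: contrapT => Sm; apply: posm.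
have [N mN] := finite_set_nat_bounded (thinC m Sm).
have [K finK XK] := cover N.
apply: (ideal_finite idealI).
apply: (sub_finite_set _ (finite_image (fun x => (g x).2) finK)).
move=> k [x Xx gx]; have [Kx|Kx] := pselect (K x); first by exists x; rewrite ?gx.
have [q [Bq Nq] fq] := XK x (conj Xx Kx).
suff : (q.1 < N)%N by rewrite ltnNge Nq.
by apply: mN; exists q => //; split; [rewrite -Ba | rewrite /= fq gx].
Qed.

End Katetov.

Theorem proposition5p4 (I J : set (set nat)) (T : Type)
    (A : T -> set nat) (B : T -> set (nat * nat)) :
  is_ideal I -> is_ideal J ->
  almost_disjoint_family A ->
  enumerates B (positive (FIN_tensor I)) ->
  ~ katetov_equiv (Abar A) (rho_FIN A B) (positive J) rho_ideal.
Proof.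
move=> idealI _ adA enumB [[g gP] [f fP]].
have [C posC [S finS thinC]] :=
  FIN_tensor_positive_thin_fibers idealI (fun q => (g (f q)).1).
exact: (katetov_witnesses_no_thin_fibers (J := J) idealI enumB adA gP fP
          posC finS thinC).
Qed.
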